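(* Let $T\ge1$, $R\ge 1$, let $\kappa_1,\dots,\kappa_R\ge 0$, let $0<\omega_1\le\cdots\le\omega_R$, and let $d_1,\dots,d_T\ge 0$ be real numbers. For $\theta\ge 0$ define $$\tilde Z_j(\theta)=\sum_{r=1}^R\kappa_r\cos(\omega_r\theta d_j),\qquad \tilde A_j(\theta)=\frac{\exp(\tilde Z_j(\theta))}{\sum_{j'=1}^T\exp(\tilde Z_{j'}(\theta))},\quad j\in[T].$$ Let $S\subseteq[T]$, $F=[T]\setminus S$, assume $d_i\le d_j$ for all $i\in S$, $j\in F$, and let $M_S(\theta)=\sum_{i\in S}\tilde A_i(\theta)$. Let $d_{\max}=\max_j d_j$ and $\omega_{\max}=\max_r\omega_r=\omega_R$. Then for every $\theta$ with $0\le \theta\le \pi/(2\omega_{\max}d_{\max})$ (any $\theta\ge0$ if $d_{\max}=0$), $$\frac{d}{d\theta}M_S(\theta)\ge 0.$$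
   Context: $[T]=\{1,\dots,T\}$. This is a reduced-form (coherent-band) model of rotary positional encoding (RoPE) in one cross-attention row: $d_j=\tilde l-j$ is the relative distance of history position $j$ from the current decoder position, $\theta$ is the overall rotary scale, and $S$ is the set of ''near'' positions. *)

From HB Require Import structures.
From mathcomp Require Import all_boot all_order all_algebra.
From mathcomp Require Import all_classical all_reals all_analysis.
Set Implicit Arguments. Unset Strict Implicit. Unset Printing Implicit Defensive.
Import Order.TTheory GRing.Theory Num.Theory.
Import numFieldNormedType.Exports.
Local Open Scope ring_scope.

(* Indices [T] are represented by 'I_T (i.e. 0..T-1), [R] by 'I_Rn. *)

Definition Zt (R : realType) (T Rn : nat) (kappa omega : 'I_Rn -> R)
  (d : 'I_T -> R) (j : 'I_T) (theta : R) : R :=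
  \sum_(r < Rn) kappa r * cos (omega r * theta * d j).

Definition At (R : realType) (T Rn : nat) (kappa omega : 'I_Rn -> R)
  (d : 'I_T -> R) (j : 'I_T) (theta : R) : R :=
  expR (Zt kappa omega d j theta) /
  \sum_(j' < T) expR (Zt kappa omega d j' theta).

Definition MS (R : realType) (T Rn : nat) (kappa omega : 'I_Rn -> R)
  (d : 'I_T -> R) (S : {set 'I_T}) (theta : R) : R :=
  \sum_(i in S) At kappa omega d i theta.

Definition dmax (R : realType) (T : nat) (d : 'I_T -> R) : R :=
  \big[Num.max/0]_(j < T) d j.

Definition omegamax (R : realType) (Rn : nat) (omega : 'I_Rn -> R) : R :=
  \big[Num.max/0]_(r < Rn) omega r.

(* Write e_j = exp Z_j(theta) and z_j = Z_j'(theta).  By the quotient rule the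
   numerator of M_S' is sum_j e_j * sum_(i in S) e_i z_i - sum_(i in S) e_i * sum_j e_j z_j
   = sum_(j notin S) sum_(i in S) e_i e_j (z_i - z_j), the pairs inside S cancelling
   by antisymmetry.  Now z_j = - sum_r kappa_r omega_r d_j sin(omega_r theta d_j), and
   d |-> d sin(a d) is nondecreasing while the phase a d stays in [0, pi/2], which is
   what the bound on theta guarantees; so d_i <= d_j gives z_i >= z_j and every term
   is nonnegative. *)
From HB Require Import structures.
From mathcomp Require Import all_boot all_order all_algebra.
From mathcomp Require Import all_classical all_reals all_analysis.
From mathcomp Require Import lra ring.
Import Order.TTheory GRing.Theory Num.Theory.
Import numFieldNormedType.Exports.
Set Implicit Arguments. Unset Strict Implicit. Unset Printing Implicit Defensive.
Local Open Scope ring_scope.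

Lemma is_derive_bigsum (R : realType) (I : finType) (P : pred I)
    (h : I -> R -> R) (dh : I -> R) (x : R) :
  (forall i, is_derive x 1 (h i) (dh i)) ->
  is_derive x 1 (fun t => \sum_(i | P i) h i t) (\sum_(i | P i) dh i).
Proof.
move=> h_derive; have -> : (fun t => \sum_(i | P i) h i t) = \sum_(i | P i) h i.
  by rewrite fct_sumE.
elim/big_ind2 : _ => [|f1 a1 f2 a2|i _]; [exact: is_derive_cst|exact: is_deriveD|].
exact: h_derive.
Qed.

Lemma ler_sin_pi2 (R : realType) (u v : R) :
  0 <= u -> u <= v -> v <= pi / 2 -> sin u <= sin v.
Proof.
move=> u_ge0 uv v_le; have pi_gt0 := @pi_gt0 R.
have sin_lt : {in `[- (pi / 2), pi / 2] &, {homo @sin R : x y / x < y}}.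
  by move=> x y xI yI xy; rewrite ltr_sin.
by rewrite (le_mono_in sin_lt) // in_itv /=; apply/andP; split; lra.
Qed.

Lemma ler_mul_sin (R : realType) (a u v : R) :
  0 <= a -> 0 <= u -> u <= v -> a * v <= pi / 2 -> u * sin (a * u) <= v * sin (a * v).
Proof.
move=> a_ge0 u_ge0 uv av_le; have pi_gt0 := @pi_gt0 R.
have au_ge0 : 0 <= a * u by rewrite mulr_ge0.
have au_le : a * u <= a * v by rewrite ler_wpM2l.
apply: ler_pM => //; last exact: ler_sin_pi2.
by apply: sin_ge0_pi; rewrite au_ge0 /=; lra.
Qed.

Lemma mass_score_cov_ge0 (R : realDomainType) (I : finType) (S : {set I})
    (e z : I -> R) :
  (forall j, 0 <= e j) -> (forall i j, i \in S -> j \notin S -> z j <= z i) ->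
  0 <= (\sum_j e j) * (\sum_(i in S) e i * z i)
       - (\sum_(i in S) e i) * (\sum_j e j * z j).
Proof.
move=> e_ge0 z_sep.
pose c j i := e j * e i * (z i - z j).
have -> : (\sum_j e j) * (\sum_(i in S) e i * z i)
          - (\sum_(i in S) e i) * (\sum_j e j * z j) = \sum_j \sum_(i in S) c j i.
  transitivity (\sum_j (e j * \sum_(i in S) e i * z i
                         - e j * z j * \sum_(i in S) e i)).
    by rewrite sumrB -!mulr_suml [X in _ - X = _]mulrC.
  apply: eq_bigr => j _; rewrite !mulr_sumr -sumrB.
  by apply: eq_bigr => i _; rewrite /c; ring.
have cS_antisym : \sum_(j in S) \sum_(i in S) c j i = 0.
  set X := LHS; suff : X = - X by lra.
  rewrite {1}/X exchange_big /= -sumrN; apply: eq_bigr => i _.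
  by rewrite -sumrN; apply: eq_bigr => j _; rewrite /c; ring.
rewrite (bigID (mem S)) /= cS_antisym add0r.
apply: sumr_ge0 => j jS; apply: sumr_ge0 => i iS.
by rewrite !mulr_ge0 // subr_ge0 z_sep.
Qed.

Section SoftmaxMass.
Variables (R : realType) (I : finType) (S : {set I}).

Definition softmax_mass (f : I -> R -> R) (t : R) : R :=
  \sum_(i in S) expR (f i t) / \sum_j expR (f j t).

Variables (f : I -> R -> R) (df : I -> R) (x : R).
Hypothesis f_derive : forall j, is_derive x 1 (f j) (df j).

Let e j := expR (f j x).

Lemma is_derive_softmax_mass (j0 : I) :
  is_derive x 1 (softmax_mass f)
    (((\sum_j e j) * (\sum_(i in S) e i * df i)
      - (\sum_(i in S) e i) * (\sum_j e j * df j)) / (\sum_j e j) ^+ 2).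
Proof.
have e_derive j : is_derive x 1 (fun t => expR (f j t)) (e j * df j).
  exact: is_derive1_comp (is_derive_expR _) (f_derive j).
have D_gt0 : 0 < \sum_j e j.
  rewrite (bigD1 j0) //= ltr_pwDl ?expR_gt0 // sumr_ge0 // => j _.
  exact/ltW/expR_gt0.
have N_derive := is_derive_bigsum (fun i => i \in S) e_derive.
have Dinv_derive := is_deriveV (lt0r_neq0 D_gt0) (is_derive_bigsum xpredT e_derive).
have -> : softmax_mass f = (fun t => \sum_(i in S) expR (f i t)) *
                           (fun t => (\sum_j expR (f j t))^-1).
  by apply/funext => t; rewrite /softmax_mass fctE mulr_suml.
apply: is_derive_eq (is_deriveM N_derive Dinv_derive) _.
by rewrite /GRing.scale /=; field; rewrite lt0r_neq0.
Qed.

Lemma softmax_mass_derive_ge0 (j0 : I) :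
  (forall i j, i \in S -> j \notin S -> df j <= df i) ->
  derivable (softmax_mass f) x 1 /\ 0 <= derive1 (softmax_mass f) x.
Proof.
move=> df_sep; have [M_derivable M_derive] := is_derive_softmax_mass j0.
split; rewrite // derive1E M_derive divr_ge0 ?sqr_ge0 //.
by apply: mass_score_cov_ge0 => // j; apply/ltW/expR_gt0.
Qed.

End SoftmaxMass.

Section RotaryLogits.
Variables (R : realType) (T Rn : nat) (kappa omega : 'I_Rn -> R) (d : 'I_T -> R).

Definition dZt (j : 'I_T) (theta : R) : R :=
  - \sum_(r < Rn) kappa r * omega r * (d j * sin (omega r * theta * d j)).

Lemma is_derive_Zt (j : 'I_T) (theta : R) :
  is_derive theta 1 (Zt kappa omega d j) (dZt j theta).
Proof.
rewrite /dZt -sumrN; apply: is_derive_bigsum => r.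
have lin_derive : is_derive theta 1 (fun t => omega r * t * d j) (omega r * d j).
  have -> : (fun t => omega r * t * d j) = (omega r * d j) *: id.
    by apply/funext => t; rewrite fctE /= mulrAC.
  apply: is_derive_eq (is_deriveZ _ (is_derive_id theta 1)) _.
  by rewrite /GRing.scale /= mulr1.
have cos_derive := is_derive1_comp (is_derive_cos _) lin_derive.
have -> : (fun t => kappa r * cos (omega r * t * d j))
          = kappa r *: (cos \o (fun t => omega r * t * d j)).
  by apply/funext => t; rewrite fctE.
by apply: is_derive_eq (is_deriveZ _ cos_derive) _; rewrite /GRing.scale /=; ring.
Qed.

Lemma dZt_antitone (theta : R) (i j : 'I_T) :
  (forall r, 0 <= kappa r) -> (forall r, 0 < omega r) -> 0 <= theta ->
  0 <= d i -> d i <= d j -> (forall r, omega r * theta * d j <= pi / 2) ->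
  dZt j theta <= dZt i theta.
Proof.
move=> kappa_ge0 omega_gt0 theta_ge0 di_ge0 dij phase_le.
rewrite lerN2; apply: ler_sum => r _.
have omega_ge0 := ltW (omega_gt0 r).
by rewrite ler_wpM2l ?mulr_ge0 //; apply: ler_mul_sin; rewrite ?mulr_ge0.
Qed.

Lemma rotary_phase_le_pi2 (theta : R) :
  (forall r, 0 < omega r) -> (forall j, 0 <= d j) -> 0 <= theta ->
  (dmax d = 0 \/ theta <= pi / (2 * omegamax omega * dmax d)) ->
  forall r j, omega r * theta * d j <= pi / 2.
Proof.
move=> omega_gt0 d_ge0 theta_ge0 theta_band r j; have pi_gt0 := @pi_gt0 R.
have dj_le : d j <= dmax d := le_bigmax _ _ j.
have [dmax0|dmax_neq0] := eqVneq (dmax d) 0.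
  suff -> : d j = 0 by rewrite mulr0; lra.
  by apply/le_anti; rewrite d_ge0 -dmax0 dj_le.
have dmax_gt0 : 0 < dmax d by rewrite lt0r dmax_neq0 (le_trans (d_ge0 j)).
have omegar_le : omega r <= omegamax omega := le_bigmax _ _ r.
have omegamax_gt0 : 0 < omegamax omega := lt_le_trans (omega_gt0 r) omegar_le.
have {}theta_band : theta * (2 * omegamax omega * dmax d) <= pi.
  case: theta_band => [/eqP|]; first by rewrite (negbTE dmax_neq0).
  by rewrite -ler_pdivlMr // !mulr_gt0.
have : omega r * theta * d j <= omegamax omega * theta * dmax d.
  by rewrite ler_pM ?mulr_ge0 ?ler_wpM2r // ltW.
nra.
Qed.

End RotaryLogits.

(* Only the positivity of the omega_r enters: omegamax is a maximum over all r. *)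
Theorem mainTheorem2 (R : realType) (T Rn : nat)
  (kappa omega : 'I_Rn -> R) (d : 'I_T -> R) (S : {set 'I_T}) (theta : R) :
  (1 <= T)%N -> (1 <= Rn)%N ->
  (forall r, 0 <= kappa r) ->
  (forall r, 0 < omega r) ->
  (forall r s : 'I_Rn, (r <= s)%N -> omega r <= omega s) ->
  (forall j, 0 <= d j) ->
  (forall i j, i \in S -> j \notin S -> d i <= d j) ->
  0 <= theta ->
  (dmax d = 0 \/ theta <= pi / (2 * omegamax omega * dmax d)) ->
  derivable (MS kappa omega d S) theta 1 /\
  0 <= derive1 (MS kappa omega d S) theta.
Proof.
move=> T_gt0 _ kappa_ge0 omega_gt0 _ d_ge0 d_sep theta_ge0 theta_band.
have phase_le := rotary_phase_le_pi2 omega_gt0 d_ge0 theta_ge0 theta_band.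
apply: (softmax_mass_derive_ge0 (is_derive_Zt kappa omega d ^~ theta)
          (Ordinal T_gt0)) => i j iS jS.
by apply: dZt_antitone => //; apply: d_sep.
Qed.
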